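(* Let $p\ge3$ and let $\{(a_j,b_j)\}_{j\ge1}$ be a $p$-periodic sequence with $a_j>0$, $b_j\in\mathbb{R}$. Let $m$ be the discrete $m$-function with continued fraction coefficients $\{(a_j,b_j)\}_{j\ge1}$, and let $m^-$ be the discrete $m$-function whose continued fraction coefficients are purely periodic with one period given by \[ (a_{p-1},b_p),(a_{p-2},b_{p-1}),\ldots,(a_1,b_2),(a_p,b_1). \] For $N\in\mathbb{N}$ let $m_N$ denote the discrete $m$-function with continued fraction coefficients $\{(a_n,b_n)\}_{n\ge N+1}$. Then for $\ell\in\{1,\ldots,p-2\}$, the sequence $\{(a_j,b_j)\}$ is doubly palindromic with period $p$ and first length $\ell$ if and only if $m^-=m_{\ell+1}$.
   Context: A discrete $m$-function is a function $m(z)=\int\frac{d\rho(x)}{x-z}$ on $\mathbb{C}_+=\{z:\operatorname{Im} z>0\}$, where $\rho$ is a probability measure on $\mathbb{R}$ with compact support. Such $m$ has a unique continued fraction expansion \[ m(z)=\cfrac{1}{b_1-z-\cfrac{a_1^2}{b_2-z-\cfrac{a_2^2}{b_3-z-\cdots}}} \] valid on $\mathbb{C}_+$, with bounded sequences $a_n>0$, $b_n\in\mathbb{R}$; the pairs $\{(a_n,b_n)\}_{n\ge1}$ are its continued fraction coefficients, and conversely every bounded such sequence is the coefficient sequence of a unique discrete $m$-function. Doubly palindromic: a $p$-periodic sequence $\{(a_j,b_j)\}$ is doubly palindromic with period $p$ and first length $\ell$ ($1\le\ell\le p-2$) if the word $a_1a_2\cdots a_p$ is the concatenation of a palindrome of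 length $\ell$ and a palindrome of length $p-\ell$, and the word $b_1b_2\cdots b_p$ is the concatenation of a palindrome of length $\ell+1$ and a palindrome of length $p-\ell-1$. *)

From Stdlib Require Import Reals Lra Lia.
From Coquelicot Require Import Coquelicot.
Open Scope R_scope.

(* Coefficient sequences are indexed from 1, as in the paper: a j, b j for j >= 1
   (the value at index 0 is irrelevant). *)

(* cf_approx a b k n z = the continued fraction with n levels starting at index k:
     cf_approx a b k 0 z = 0,
     cf_approx a b k (n+1) z = 1 / (b_k - z - a_k^2 * cf_approx a b (k+1) n z),
   so cf_approx a b 1 n z = 1/(b_1 - z - a_1^2/(b_2 - z - ... a_{n-1}^2/(b_n - z))). *)
Fixpoint cf_approx (a b : nat -> R) (k n : nat) (z : C) : C :=
  match n with
  | O => 0%C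
  | S n' => Cinv (Cminus (Cminus (RtoC (b k)) z)
                         (Cmult (RtoC (a k ^ 2)) (cf_approx a b (S k) n' z)))
  end.

Definition is_mfun (a b : nat -> R) (m : C -> C) : Prop :=
  forall z : C, 0 < Im z ->
    filterlim (fun n => cf_approx a b 1 n z) eventually (locally (m z)).

Definition shift_seq (N : nat) (a : nat -> R) : nat -> R := fun j => a (j + N)%nat.

(* The reflected purely periodic coefficients with one period
   (a_{p-1},b_p), (a_{p-2},b_{p-1}), ..., (a_1,b_2), (a_p,b_1). *)
Definition refl_a (p : nat) (a : nat -> R) : nat -> R :=
  fun j => let k := S ((j - 1) mod p) in
           if (k <? p)%nat then a (p - k)%nat else a p.
Definition refl_b (p : nat) (b : nat -> R) : nat -> R :=
  fun j => let k := S ((j - 1) mod p) in b (p - k + 1)%nat.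

Definition periodic_coeffs (p : nat) (a b : nat -> R) : Prop :=
  forall j : nat, (1 <= j)%nat -> a (j + p)%nat = a j /\ b (j + p)%nat = b j.

(* Doubly palindromic with period p and first length l:
   a_1...a_p = (palindrome of length l)(palindrome of length p-l),
   b_1...b_p = (palindrome of length l+1)(palindrome of length p-l-1). *)
Definition doubly_palindromic (p l : nat) (a b : nat -> R) : Prop :=
  periodic_coeffs p a b /\ (1 <= l)%nat /\ (l <= p - 2)%nat /\
  (forall i, (1 <= i <= l)%nat -> a i = a (l + 1 - i)%nat) /\
  (forall i, (1 <= i <= p - l)%nat -> a (l + i)%nat = a (p + 1 - i)%nat) /\
  (forall i, (1 <= i <= l + 1)%nat -> b i = b (l + 2 - i)%nat) /\
  (forall i, (1 <= i <= p - l - 1)%nat -> b (l + 1 + i)%nat = b (p + 1 - i)%nat).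

From Stdlib Require Import Arith Reals Lra Lia.
From Coquelicot Require Import Coquelicot.
Open Scope R_scope.

(* Equal coefficient sequences give equal m-functions, since an m-function is the limit
   of its approximants. Conversely an m-function determines its coefficients: from
   1/m(z) = b_1 - z - a_1^2 m_1(z) and |m_1(z)| <= 1/Im z one reads off b_1 as
   Im z -> oo, then a_1^2 from the normalisation z m_1(z) -> -1, and one recurses on the
   tail m_1. Hence m^- = m_(l+1) iff the reflected period coincides with the period
   shifted by l+1; read modulo p, this says that a_1 ... a_p is a palindrome of length l
   followed by one of length p-l, and b_1 ... b_p one of length l+1 followed by one of
   length p-l-1. *)

Lemma Rabs_Im_le_Cmod (w : C) : Rabs (Im w) <= Cmod w.
Proof. eapply Rle_trans; [apply Rmax_r | apply Rmax_Cmod]. Qed.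

Lemma Im_Cinv_ge0 (w : C) : Im w <= 0 -> 0 <= Im (/ w).
Proof.
  destruct w as [u v]; simpl; rewrite !Rmult_1_r; intros Hv.
  destruct (Req_dec (u * u + v * v) 0) as [E | E].
  - rewrite E. unfold Rdiv. rewrite Rinv_0. lra.
  - apply Rmult_le_pos; [lra |].
    apply Rlt_le, Rinv_0_lt_compat. nra.
Qed.

Lemma Cmod_Cinv_le (w : C) (t : R) : 0 < t -> Im w <= - t -> Cmod (/ w) <= / t.
Proof.
  intros Ht Hw.
  assert (Hmod : t <= Cmod w).
  { eapply Rle_trans; [| apply Rabs_Im_le_Cmod]. rewrite Rabs_left; lra. }
  rewrite Cmod_inv.
  - apply Rinv_le_contravar; lra.
  - intros ->. simpl in Hw. lra.
Qed.

Lemma Rabs_le_div_eq0 (d K : R) : (forall t, 1 <= t -> Rabs d <= K / t) -> d = 0.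
Proof.
  intros H. destruct (Req_dec d 0) as [| Hd]; [assumption | exfalso].
  assert (Hd' : 0 < Rabs d) by (apply Rabs_pos_lt; exact Hd).
  assert (HK : Rabs d <= K) by (specialize (H 1 (Rle_refl 1)); rewrite Rdiv_1_r in H; exact H).
  set (t := (K + 1) / Rabs d).
  assert (Ht : 1 <= t).
  { unfold t. apply Rmult_le_reg_r with (Rabs d); [assumption |].
    field_simplify; lra. }
  specialize (H t Ht).
  assert (Rabs d * t = K + 1) by (unfold t; field; lra).
  apply Rmult_le_compat_r with (r := t) in H; [| lra].
  unfold Rdiv in H. rewrite Rmult_assoc, Rinv_l in H by lra. lra.
Qed.

Section Limits.

Variables (u : nat -> C) (l : C).
Hypothesis Hu : filterlim u eventually (locally l).

Lemma filterlim_C_dominated (v : nat -> C) (k : C) (K : R) :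
  eventually (fun n => Cmod (v n - k)%C <= K * Cmod (u n - l)%C) ->
  filterlim v eventually (locally k).
Proof.
  intros Hvu.
  pose proof (proj1 (filterlim_locally_ball_norm (K := C_AbsRing) (U := C_NormedModule) u l) Hu)
    as Hball.
  apply (filterlim_locally_ball_norm (K := C_AbsRing) (U := C_NormedModule)).
  intros eps.
  assert (HK : 0 < Rabs K + 1) by (pose proof (Rabs_pos K); lra).
  assert (Heps : 0 < eps / (Rabs K + 1)) by (apply Rdiv_lt_0_compat; [apply cond_pos | lra]).
  generalize (filter_and _ _ Hvu (Hball (mkposreal _ Heps))).
  apply filter_imp. intros n [Hle Hlt].
  change (Cmod (v n - k)%C < eps). change (Cmod (u n - l)%C < eps / (Rabs K + 1)) in Hlt.
  assert (K * Cmod (u n - l)%C <= (Rabs K + 1) * Cmod (u n - l)%C).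
  { apply Rmult_le_compat_r; [apply Cmod_ge_0 |]. pose proof (Rle_abs K); lra. }
  apply Rmult_lt_compat_l with (r := Rabs K + 1) in Hlt; [| lra].
  replace ((Rabs K + 1) * (eps / (Rabs K + 1))) with (pos eps) in Hlt by (field; lra).
  lra.
Qed.

Lemma Cmod_lim_le (B : R) : eventually (fun n => Cmod (u n) <= B) -> Cmod l <= B.
Proof.
  intros HB. apply (closed_filterlim_loc u (fun w => Cmod w <= B) l Hu HB).
  apply (closed_comp Cmod (fun r => r <= B)); [| apply closed_le].
  intros x. exact (filterlim_norm (V := C_NormedModule) x).
Qed.

Lemma Cmod_lim_ge (B : R) : eventually (fun n => B <= Cmod (u n)) -> B <= Cmod l.
Proof.
  intros HB. apply (closed_filterlim_loc u (fun w => B <= Cmod w) l Hu HB).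
  apply (closed_comp Cmod (fun r => B <= r)); [| apply closed_ge].
  intros x. exact (filterlim_norm (V := C_NormedModule) x).
Qed.

End Limits.

Definition cf_den (a b : nat -> R) (k n : nat) (z : C) : C :=
  (b k - z - (a k ^ 2)%R * cf_approx a b (S k) n z)%C.

Lemma cf_approx_S a b k n z : cf_approx a b k (S n) z = (/ cf_den a b k n z)%C.
Proof. reflexivity. Qed.

Lemma cf_approx_shift_seq a b s k n z :
  cf_approx (shift_seq s a) (shift_seq s b) k n z = cf_approx a b (k + s) n z.
Proof.
  revert k. induction n as [| n IH]; intros k; [reflexivity |].
  rewrite !cf_approx_S. unfold cf_den. rewrite IH. reflexivity.
Qed.

Lemma cf_approx_ext a b a' b' z :
  (forall j, (1 <= j)%nat -> a j = a' j /\ b j = b' j) ->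
  forall n k, (1 <= k)%nat -> cf_approx a b k n z = cf_approx a' b' k n z.
Proof.
  intros H n. induction n as [| n IH]; intros k Hk; [reflexivity |].
  rewrite !cf_approx_S. unfold cf_den. rewrite IH by lia.
  destruct (H k Hk) as [-> ->]. reflexivity.
Qed.

Section Approximants.

Variables (a b : nat -> R) (z : C).
Hypothesis Hz : 0 < Im z.

Lemma Im_cf_den k n :
  Im (cf_den a b k n z) = - Im z - a k ^ 2 * Im (cf_approx a b (S k) n z).
Proof.
  unfold cf_den. destruct z, (cf_approx a b (S k) n _). simpl. ring.
Qed.

Lemma cf_approx_Im_ge0 n k : 0 <= Im (cf_approx a b k n z).
Proof.
  revert k. induction n as [| n IH]; intros k; [simpl; lra |].
  rewrite cf_approx_S. apply Im_Cinv_ge0.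
  rewrite Im_cf_den. pose proof (pow2_ge_0 (a k)). pose proof (IH (S k)). nra.
Qed.

Lemma Im_cf_den_le k n : Im (cf_den a b k n z) <= - Im z.
Proof.
  rewrite Im_cf_den. pose proof (pow2_ge_0 (a k)). pose proof (cf_approx_Im_ge0 n (S k)). nra.
Qed.

Lemma cf_den_neq0 k n : cf_den a b k n z <> 0%C.
Proof. intros E. pose proof (Im_cf_den_le k n) as H. rewrite E in H. simpl in H. lra. Qed.

Lemma Cmod_cf_approx_le n k : Cmod (cf_approx a b k n z) <= / Im z.
Proof.
  destruct n as [| n].
  - simpl cf_approx. rewrite Cmod_0. apply Rlt_le, Rinv_0_lt_compat, Hz.
  - rewrite cf_approx_S. apply Cmod_Cinv_le; [exact Hz | apply Im_cf_den_le].
Qed.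

Lemma Cmod_cf_den_le k n :
  Cmod (cf_den a b k n z) <= Rabs (b k) + Cmod z + a k ^ 2 / Im z.
Proof.
  unfold cf_den, Cminus.
  eapply Rle_trans; [apply Cmod_triangle |].
  eapply Rle_trans; [apply Rplus_le_compat_r, Cmod_triangle |].
  rewrite !Cmod_opp, Cmod_mult, !Cmod_R, (Rabs_pos_eq (a k ^ 2)) by apply pow2_ge_0.
  apply Rplus_le_compat_l, Rmult_le_compat_l; [apply pow2_ge_0 | apply Cmod_cf_approx_le].
Qed.

Lemma cf_approx_S_away_from0 k :
  exists2 L, 0 < L & forall n, L <= Cmod (cf_approx a b k (S n) z).
Proof.
  exists (/ (Rabs (b k) + Cmod z + a k ^ 2 / Im z)).
  - apply Rinv_0_lt_compat.
    pose proof (Rabs_pos (b k)). pose proof (Rabs_Im_le_Cmod z).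
    assert (0 <= a k ^ 2 / Im z) by (apply Rdiv_le_0_compat; [apply pow2_ge_0 | exact Hz]).
    rewrite Rabs_pos_eq in * by lra. lra.
  - intros n. rewrite cf_approx_S, Cmod_inv by apply cf_den_neq0.
    apply Rinv_le_contravar; [| apply Cmod_cf_den_le].
    apply Cmod_gt_0, cf_den_neq0.
Qed.

(* Since z c + 1 = c (z + 1 / c), the defining recursion gives z c + 1 = c (b_k - a_k^2 c'). *)
Lemma Cmod_cf_approx_S_asym k n :
  Cmod (z * cf_approx a b k (S n) z + 1)%C <= (Rabs (b k) + a k ^ 2 / Im z) / Im z.
Proof.
  set (c' := cf_approx a b (S k) n z).
  assert (E : (z * cf_approx a b k (S n) z + 1)%C
              = (cf_approx a b k (S n) z * (b k - (a k ^ 2)%R * c'))%C).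
  { rewrite cf_approx_S. unfold cf_den. fold c'. field.
    apply (cf_den_neq0 k n). }
  rewrite E, Cmod_mult, Rmult_comm. unfold Rdiv.
  apply Rmult_le_compat; [apply Cmod_ge_0 | apply Cmod_ge_0 | | apply Cmod_cf_approx_le].
  unfold Cminus. eapply Rle_trans; [apply Cmod_triangle |].
  rewrite Cmod_opp, Cmod_mult, !Cmod_R, (Rabs_pos_eq (a k ^ 2)) by apply pow2_ge_0.
  apply Rplus_le_compat_l, Rmult_le_compat_l; [apply pow2_ge_0 | apply Cmod_cf_approx_le].
Qed.

End Approximants.

Definition mfun_tail (a b : nat -> R) (m : C -> C) : C -> C :=
  fun z => ((b 1%nat - z - / m z) / (a 1%nat ^ 2)%R)%C.

Section MFunction.

Variables (a b : nat -> R) (m : C -> C).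
Hypothesis Hm : is_mfun a b m.

Lemma is_mfun_S z : 0 < Im z ->
  filterlim (fun n => cf_approx a b 1 (S n) z) eventually (locally (m z)).
Proof.
  intros Hz. apply (filterlim_comp _ _ _ S (fun n => cf_approx a b 1 n z) _ eventually).
  - apply eventually_subseq. intros n. lia.
  - exact (Hm z Hz).
Qed.

Lemma Cmod_mfun_le z : 0 < Im z -> Cmod (m z) <= / Im z.
Proof.
  intros Hz. apply (Cmod_lim_le _ _ (Hm z Hz)).
  exists O. intros n _. exact (Cmod_cf_approx_le a b z Hz n 1).
Qed.

Lemma mfun_neq0 z : 0 < Im z -> m z <> 0%C.
Proof.
  intros Hz. destruct (cf_approx_S_away_from0 a b z Hz 1) as [L HL Hc].
  apply Cmod_gt_0. apply Rlt_le_trans with L; [exact HL |].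
  apply (Cmod_lim_ge _ _ (is_mfun_S z Hz)). exists O. intros n _. apply Hc.
Qed.

Lemma Cmod_mfun_asym z : 1 <= Im z ->
  Cmod (z * m z + 1)%C <= (Rabs (b 1%nat) + a 1%nat ^ 2) / Im z.
Proof.
  intros Hz.
  assert (Hz0 : 0 < Im z) by lra.
  apply (Cmod_lim_le (fun n => z * cf_approx a b 1 (S n) z + 1)%C).
  - apply (filterlim_C_dominated _ _ (is_mfun_S z Hz0) _ _ (Cmod z)).
    exists O. intros n _. apply Req_le.
    rewrite <- Cmod_mult. f_equal. ring.
  - exists O. intros n _. eapply Rle_trans; [apply Cmod_cf_approx_S_asym; exact Hz0 |].
    apply Rmult_le_compat_r; [apply Rlt_le, Rinv_0_lt_compat; exact Hz0 |].
    apply Rplus_le_compat_l. unfold Rdiv.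
    rewrite <- (Rmult_1_r (a 1%nat ^ 2)) at 2.
    apply Rmult_le_compat_l; [apply pow2_ge_0 |].
    rewrite <- Rinv_1. apply Rinv_le_contravar; lra.
Qed.

Lemma mfun_inv_tail z : a 1%nat <> 0 -> 0 < Im z ->
  (/ m z)%C = (b 1%nat - z - (a 1%nat ^ 2)%R * mfun_tail a b m z)%C.
Proof.
  intros Ha Hz. unfold mfun_tail. field.
  split; [apply mfun_neq0, Hz |].
  intros E. apply RtoC_inj in E. apply (pow_nonzero _ 2 Ha E).
Qed.

(* The n-th approximant of the tail is the (n+1)-st approximant of m run backwards
   through one step of the recursion, and w |-> (b_1 - z - 1/w) / a_1^2 is Lipschitz
   near m z because the approximants stay away from 0. *)
Lemma is_mfun_tail : a 1%nat <> 0 ->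
  is_mfun (shift_seq 1 a) (shift_seq 1 b) (mfun_tail a b m).
Proof.
  intros Ha z Hz.
  set (A := a 1%nat ^ 2).
  assert (HA : 0 < A) by (apply pow2_gt_0, Ha).
  assert (HA0 : RtoC A <> 0%C) by (intros E; apply RtoC_inj in E; lra).
  destruct (cf_approx_S_away_from0 a b z Hz 1) as [L HL Hc].
  assert (Hm0 := mfun_neq0 z Hz).
  assert (Hmz : 0 < Cmod (m z)) by (apply Cmod_gt_0, Hm0).
  apply (filterlim_C_dominated _ _ (is_mfun_S z Hz) _ _ (/ (L * Cmod (m z) * A))).
  exists O. intros n _. rewrite cf_approx_shift_seq. change (1 + 1)%nat with 2%nat.
  set (c := cf_approx a b 1 (S n) z).
  assert (Hcm : L <= Cmod c) by apply Hc.
  assert (Hc0 : c <> 0%C) by (apply Cmod_gt_0; lra).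
  assert (E : (cf_approx a b 2 n z - mfun_tail a b m z)%C = ((c - m z) / (c * m z * A))%C).
  { assert (Ec : cf_approx a b 2 n z = ((b 1%nat - z - / c) / A)%C).
    { unfold c. rewrite cf_approx_S. unfold cf_den. fold A. field.
      split; [apply (cf_den_neq0 a b z Hz 1 n) | exact HA0]. }
    rewrite Ec. unfold mfun_tail. fold A. field. auto. }
  rewrite E, Cmod_div, !Cmod_mult, Cmod_R, Rabs_pos_eq by (auto using Cmult_neq_0; lra).
  unfold Rdiv. rewrite (Rmult_comm (/ _)).
  apply Rmult_le_compat_l; [apply Cmod_ge_0 |].
  apply Rinv_le_contravar; [apply Rmult_lt_0_compat; [apply Rmult_lt_0_compat |]; lra |].
  apply Rmult_le_compat_r; [lra |]. apply Rmult_le_compat_r; lra.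
Qed.

End MFunction.

Lemma is_mfun_ext a b a' b' m m' :
  is_mfun a b m -> is_mfun a' b' m' ->
  (forall j, (1 <= j)%nat -> a j = a' j /\ b j = b' j) ->
  forall z, 0 < Im z -> m z = m' z.
Proof.
  intros Hm Hm' Hab z Hz.
  apply (filterlim_locally_unique (V := C_NormedModule) (F := eventually)
           (fun n => cf_approx a b 1 n z));
    [exact (Hm z Hz) |].
  apply (filterlim_ext (fun n => cf_approx a' b' 1 n z)); [| exact (Hm' z Hz)].
  intros n. symmetry. apply cf_approx_ext; [exact Hab | lia].
Qed.

(* The normalisation z m(z) -> -1 as Im z -> oo pins down the scale of an m-function. *)
Lemma is_mfun_scale_unique a b a' b' m m' (c c' : R) :
  is_mfun a b m -> is_mfun a' b' m' ->
  (forall z, 0 < Im z -> (c * m z = c' * m' z)%C) -> c = c'.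
Proof.
  intros Hm Hm' H. apply Rminus_diag_uniq.
  apply (Rabs_le_div_eq0 _ (Rabs c * (Rabs (b 1%nat) + a 1%nat ^ 2)
                            + Rabs c' * (Rabs (b' 1%nat) + a' 1%nat ^ 2))).
  intros t Ht. set (z := (0, t) : C).
  assert (Hz : 1 <= Im z) by exact Ht.
  assert (E : RtoC (c - c') = (c * (z * m z + 1) - c' * (z * m' z + 1))%C).
  { rewrite RtoC_minus.
    replace (c * (z * m z + 1) - c' * (z * m' z + 1))%C
      with (z * (c * m z - c' * m' z) + (c - c'))%C by ring.
    rewrite (H z ltac:(lra)). ring. }
  rewrite <- Cmod_R, E. unfold Cminus.
  eapply Rle_trans; [apply Cmod_triangle |].
  rewrite Cmod_opp, !Cmod_mult, !Cmod_R.
  unfold Rdiv. rewrite Rmult_plus_distr_r, !Rmult_assoc.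
  apply Rplus_le_compat; apply Rmult_le_compat_l; try apply Rabs_pos.
  - exact (Cmod_mfun_asym a b m Hm z Hz).
  - exact (Cmod_mfun_asym a' b' m' Hm' z Hz).
Qed.

Lemma is_mfun_first_coeffs_unique a b a' b' m m' :
  is_mfun a b m -> is_mfun a' b' m' -> a 1%nat <> 0 -> a' 1%nat <> 0 ->
  (forall z, 0 < Im z -> m z = m' z) ->
  b 1%nat = b' 1%nat /\ a 1%nat ^ 2 = a' 1%nat ^ 2.
Proof.
  intros Hm Hm' Ha Ha' H.
  set (A := a 1%nat ^ 2). set (A' := a' 1%nat ^ 2).
  assert (Hm1 := is_mfun_tail a b m Hm Ha). assert (Hm1' := is_mfun_tail a' b' m' Hm' Ha').
  set (m1 := mfun_tail a b m) in *. set (m1' := mfun_tail a' b' m') in *.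
  assert (Hinv : forall z, 0 < Im z ->
            (b 1%nat - z - A * m1 z = b' 1%nat - z - A' * m1' z)%C).
  { intros z Hz. unfold A, A', m1, m1'.
    rewrite <- (mfun_inv_tail a b m Hm z Ha Hz), <- (mfun_inv_tail a' b' m' Hm' z Ha' Hz), H;
      [reflexivity | exact Hz]. }
  assert (Hb : b 1%nat = b' 1%nat).
  { apply Rminus_diag_uniq, (Rabs_le_div_eq0 _ (A + A')).
    intros t Ht. set (z := (0, t) : C).
    assert (Hz : 0 < Im z) by (simpl; lra).
    assert (E : RtoC (b 1%nat - b' 1%nat) = (A * m1 z - A' * m1' z)%C).
    { rewrite RtoC_minus.
      replace (A * m1 z - A' * m1' z)%C with
        (b 1%nat - b' 1%nat - ((b 1%nat - z - A * m1 z) - (b' 1%nat - z - A' * m1' z)))%C by ring.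
      rewrite (Hinv z Hz). ring. }
    rewrite <- Cmod_R, E. unfold Cminus.
    eapply Rle_trans; [apply Cmod_triangle |].
    assert (0 <= A) by apply pow2_ge_0. assert (0 <= A') by apply pow2_ge_0.
    rewrite Cmod_opp, !Cmod_mult, !Cmod_R, !Rabs_pos_eq by assumption.
    unfold Rdiv. rewrite Rmult_plus_distr_r.
    apply Rplus_le_compat; apply Rmult_le_compat_l; try assumption.
    - exact (Cmod_mfun_le _ _ _ Hm1 z Hz).
    - exact (Cmod_mfun_le _ _ _ Hm1' z Hz). }
  split; [exact Hb |].
  apply (is_mfun_scale_unique _ _ _ _ _ _ _ _ Hm1 Hm1').
  intros z Hz. pose proof (Hinv z Hz) as E. rewrite Hb in E.
  replace (A * m1 z)%C with (b' 1%nat - z - (b' 1%nat - z - A * m1 z))%C by ring.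
  rewrite E. ring.
Qed.

Lemma is_mfun_coeffs_unique a b a' b' m m' :
  (forall j, (1 <= j)%nat -> 0 < a j) -> (forall j, (1 <= j)%nat -> 0 < a' j) ->
  is_mfun a b m -> is_mfun a' b' m' -> (forall z, 0 < Im z -> m z = m' z) ->
  forall j, (1 <= j)%nat -> a j = a' j /\ b j = b' j.
Proof.
  intros Hpos Hpos' Hm Hm' H j Hj.
  revert a b a' b' m m' Hpos Hpos' Hm Hm' H.
  induction j as [| j IH]; intros a b a' b' m m' Hpos Hpos' Hm Hm' H; [lia |].
  assert (Ha1 := Hpos 1%nat (le_n 1)). assert (Ha1' := Hpos' 1%nat (le_n 1)).
  destruct (is_mfun_first_coeffs_unique a b a' b' m m' Hm Hm') as [Hb Ha];
    [lra | lra | exact H |].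
  assert (Ha1eq : a 1%nat = a' 1%nat) by nra.
  destruct j as [| j]; [split; assumption |].
  replace (S (S j)) with (S j + 1)%nat by lia.
  apply (IH ltac:(lia) (shift_seq 1 a) (shift_seq 1 b) (shift_seq 1 a') (shift_seq 1 b')
           (mfun_tail a b m) (mfun_tail a' b' m')).
  - intros i Hi. apply Hpos. unfold shift_seq. lia.
  - intros i Hi. apply Hpos'. unfold shift_seq. lia.
  - apply is_mfun_tail; [exact Hm | lra].
  - apply is_mfun_tail; [exact Hm' | lra].
  - intros z Hz. unfold mfun_tail. rewrite Ha1eq, Hb, (H z Hz). reflexivity.
Qed.

Definition periodic_seq (p : nat) (f : nat -> R) : Prop :=
  forall j, (1 <= j)%nat -> f (j + p)%nat = f j.

Definition pal_concat (p n : nat) (f : nat -> R) : Prop :=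
  (forall i, (1 <= i <= n)%nat -> f i = f (n + 1 - i)%nat) /\
  (forall i, (1 <= i <= p - n)%nat -> f (n + i)%nat = f (p + 1 - i)%nat).

Lemma periodic_coeffs_seq p a b :
  periodic_coeffs p a b <-> periodic_seq p a /\ periodic_seq p b.
Proof.
  split.
  - intros H. split; intros j Hj; apply (H j Hj).
  - intros [Ha Hb] j Hj. split; [apply Ha | apply Hb]; exact Hj.
Qed.

Lemma periodic_seq_eq p f g : (0 < p)%nat ->
  periodic_seq p f -> periodic_seq p g ->
  (forall j, (1 <= j <= p)%nat -> f j = g j) ->
  forall j, (1 <= j)%nat -> f j = g j.
Proof.
  intros Hp Hf Hg H j. induction j as [j IH] using lt_wf_ind. intros Hj.
  destruct (Nat.le_gt_cases j p) as [Hjp | Hjp]; [apply H; lia |].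
  replace j with (j - p + p)%nat by lia.
  rewrite Hf, Hg by lia. apply IH; lia.
Qed.

Lemma shift_seq_periodic p N f : periodic_seq p f -> periodic_seq p (shift_seq N f).
Proof.
  intros Hf j Hj. unfold shift_seq.
  replace (j + p + N)%nat with (j + N + p)%nat by lia. apply Hf. lia.
Qed.

Lemma refl_index_periodic p j : (1 <= j)%nat ->
  ((j + p - 1) mod p = (j - 1) mod p)%nat.
Proof.
  intros Hj. replace (j + p - 1)%nat with (j - 1 + 1 * p)%nat by lia.
  apply Nat.Div0.mod_add.
Qed.

Lemma refl_a_periodic p a : periodic_seq p (refl_a p a).
Proof. intros j Hj. unfold refl_a. rewrite refl_index_periodic by assumption. reflexivity. Qed.

Lemma refl_b_periodic p b : periodic_seq p (refl_b p b).
Proof. intros j Hj. unfold refl_b. rewrite refl_index_periodic by assumption. reflexivity. Qed.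

Lemma refl_index_small p k : (1 <= k <= p)%nat -> S ((k - 1) mod p) = k.
Proof. intros Hk. rewrite Nat.mod_small by lia. lia. Qed.

Lemma refl_a_small p a k : (1 <= k <= p)%nat ->
  refl_a p a k = if (k <? p)%nat then a (p - k)%nat else a p.
Proof. intros Hk. unfold refl_a. rewrite refl_index_small by assumption. reflexivity. Qed.

Lemma refl_b_small p b k : (1 <= k <= p)%nat -> refl_b p b k = b (p + 1 - k)%nat.
Proof. intros Hk. unfold refl_b. rewrite refl_index_small by assumption. f_equal. lia. Qed.

Lemma pal_concat_iff p n f : (n <= p)%nat -> periodic_seq p f ->
  pal_concat p n f <-> forall k, (1 <= k <= p)%nat -> f (p + 1 - k)%nat = f (k + n)%nat.
Proof.
  intros Hn Hf. split.
  - intros [H1 H2] k Hk. destruct (Nat.le_gt_cases k (p - n)) as [Hkn | Hkn].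
    + rewrite <- H2, Nat.add_comm by lia. reflexivity.
    + set (i := (k + n - p)%nat).
      replace (k + n)%nat with (i + p)%nat by lia.
      replace (p + 1 - k)%nat with (n + 1 - i)%nat by lia.
      rewrite Hf by lia. symmetry. apply H1. lia.
  - intros H. split.
    + intros i Hi. specialize (H (p - n + i)%nat ltac:(lia)).
      replace (p + 1 - (p - n + i))%nat with (n + 1 - i)%nat in H by lia.
      replace (p - n + i + n)%nat with (i + p)%nat in H by lia.
      rewrite H, Hf by lia. reflexivity.
    + intros i Hi. rewrite (H i ltac:(lia)), Nat.add_comm. reflexivity.
Qed.

Lemma refl_b_shift_iff p n b : (0 < p)%nat -> (n <= p)%nat -> periodic_seq p b ->
  (forall j, (1 <= j)%nat -> refl_b p b j = shift_seq n b j) <-> pal_concat p n b.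
Proof.
  intros Hp Hn Hb. rewrite pal_concat_iff by assumption. split.
  - intros H k Hk. rewrite <- (refl_b_small p b k Hk). apply H. lia.
  - intros H. apply (periodic_seq_eq p);
      [assumption | apply refl_b_periodic | apply shift_seq_periodic, Hb |].
    intros k Hk. rewrite refl_b_small by assumption. apply H, Hk.
Qed.

Lemma refl_a_shift_iff p n a : (0 < p)%nat -> (n < p)%nat -> periodic_seq p a ->
  (forall j, (1 <= j)%nat -> refl_a p a j = shift_seq (n + 1) a j) <-> pal_concat p n a.
Proof.
  intros Hp Hn Ha.
  assert (Hwrap : a (p + (n + 1))%nat = a (n + 1)%nat)
    by (rewrite Nat.add_comm; apply Ha; lia).
  rewrite pal_concat_iff by (assumption || lia). split.
  - intros H k Hk. unfold shift_seq in H. destruct (Nat.eq_dec k 1) as [-> | Hk1].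
    + specialize (H p ltac:(lia)). rewrite refl_a_small, Nat.ltb_irrefl in H by lia.
      rewrite Nat.add_sub, H, Hwrap, Nat.add_comm. reflexivity.
    + specialize (H (k - 1)%nat ltac:(lia)).
      rewrite refl_a_small in H by lia. destruct (Nat.ltb_spec (k - 1) p); [| lia].
      replace (p + 1 - k)%nat with (p - (k - 1))%nat by lia.
      rewrite H. f_equal. lia.
  - intros H. apply (periodic_seq_eq p);
      [assumption | apply refl_a_periodic | apply shift_seq_periodic, Ha |].
    intros k Hk. unfold shift_seq. rewrite refl_a_small by assumption.
    destruct (Nat.ltb_spec k p).
    + specialize (H (k + 1)%nat ltac:(lia)).
      replace (p + 1 - (k + 1))%nat with (p - k)%nat in H by lia.
      rewrite H. f_equal. lia.
    + replace k with p by lia. rewrite Hwrap.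
      specialize (H 1%nat ltac:(lia)). rewrite Nat.add_sub in H. rewrite H. f_equal. lia.
Qed.

Lemma doubly_palindromic_pal_concat p l a b :
  periodic_coeffs p a b -> (1 <= l)%nat -> (l <= p - 2)%nat ->
  doubly_palindromic p l a b <-> pal_concat p l a /\ pal_concat p (l + 1) b.
Proof.
  intros Hper Hl1 Hl2. split.
  - intros (_ & _ & _ & Ha1 & Ha2 & Hb1 & Hb2). split; split; try assumption.
    + intros i Hi. rewrite Hb1 by lia. f_equal. lia.
    + intros i Hi. apply Hb2. lia.
  - intros [[Ha1 Ha2] [Hb1 Hb2]]. unfold doubly_palindromic.
    repeat (split; [assumption |]). split.
    + intros i Hi. rewrite Hb1 by lia. f_equal. lia.
    + intros i Hi. apply Hb2. lia.
Qed.

Lemma refl_a_pos p a : (0 < p)%nat -> (forall j, (1 <= j)%nat -> 0 < a j) ->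
  forall j, (1 <= j)%nat -> 0 < refl_a p a j.
Proof.
  intros Hp Hpos j _. unfold refl_a. cbv zeta.
  destruct (Nat.ltb_spec (S ((j - 1) mod p)) p); apply Hpos; lia.
Qed.

Lemma doubly_palindromic_iff_refl_shift p l a b :
  periodic_coeffs p a b -> (1 <= l)%nat -> (l <= p - 2)%nat ->
  doubly_palindromic p l a b <->
  forall j, (1 <= j)%nat ->
    refl_a p a j = shift_seq (l + 1) a j /\ refl_b p b j = shift_seq (l + 1) b j.
Proof.
  intros Hper Hl1 Hl2.
  pose proof (proj1 (periodic_coeffs_seq p a b) Hper) as [Ha Hb].
  rewrite doubly_palindromic_pal_concat, <- refl_a_shift_iff, <- refl_b_shift_iff
    by (assumption || lia).
  split.
  - intros [Hra Hrb] j Hj. split; [apply Hra | apply Hrb]; exact Hj.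
  - intros H. split; intros j Hj; apply (H j Hj).
Qed.

Theorem mainTheorem4 (p l : nat) (a b : nat -> R) (mminus mshift : C -> C) :
  (3 <= p)%nat ->
  periodic_coeffs p a b ->
  (forall j : nat, (1 <= j)%nat -> 0 < a j) ->
  (1 <= l)%nat -> (l <= p - 2)%nat ->
  is_mfun (refl_a p a) (refl_b p b) mminus ->
  is_mfun (shift_seq (l + 1) a) (shift_seq (l + 1) b) mshift ->
  (doubly_palindromic p l a b <-> (forall z : C, 0 < Im z -> mminus z = mshift z)).
Proof.
  (* 3 <= p is implied by 1 <= l <= p - 2. *)
  intros _ Hper Hpos Hl1 Hl2 Hminus Hshift.
  rewrite doubly_palindromic_iff_refl_shift by assumption.
  split.
  - apply is_mfun_ext; assumption.
  - apply is_mfun_coeffs_unique; try assumption.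
    + apply refl_a_pos; [lia | exact Hpos].
    + intros j Hj. apply Hpos. unfold shift_seq. lia.
Qed.
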